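(* Let $\mathcal P_m$ be the $1$-dimensional PVAS with states $\{\perp,0,1,\dots,m\}$, stack alphabet $\{\gamma_0,\dots,\gamma_m\}$ and transitions $(\perp,0,\mathrm{pop}(\gamma_0),0)$, $(0,+1,\mathrm{nop},\perp)$, and for each $i\in\{1,\dots,m\}$: $(\perp,0,\mathrm{pop}(\gamma_i),i)$, $(i,+1,\mathrm{push}(\gamma_{i-1}),\perp)$, $(i,-1,\mathrm{push}(\gamma_{i-1}),i)$. Define for $c\in\mathbb N$ and $w=\gamma_{i_1}\cdots\gamma_{i_k}$ the number $\theta(c,w)=A_{i_1}\circ\cdots\circ A_{i_k}(c)$ (so $\theta(c,\varepsilon)=c$). Then for all $c,c'\in\mathbb N$ and $w,w'\in\{\gamma_0,\dots,\gamma_m\}^*$, if $(\perp,c,w)\xrightarrow{*}(\perp,c',w')$ then $\theta(c,w)\ge\theta(c',w')\ge c'+|w'|$. Consequently, from any configuration of $\mathcal P_m$ only finitely many configurations are reachable.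
   Context: Ackermann functions $A_j:\mathbb N\to\mathbb N$: $A_0(n)=n+1$, $A_j(n)=A_{j-1}^{n+1}(1)$ for $j>0$. For a $1$-dimensional PVAS with transitions in $Q\times\mathbb Z\times\mathrm{Op}(\Gamma)\times Q$, configurations are $(q,c,w)\in Q\times\mathbb N\times\Gamma^*$, and $(p,c,u)\to(q,d,v)$ iff some transition $(p,a,\mathrm{op},q)$ has $d=c+a\ge0$ and either $\mathrm{op}=\mathrm{push}(\gamma)$, $v=u\gamma$; or $\mathrm{op}=\mathrm{pop}(\gamma)$, $u=v\gamma$; or $\mathrm{op}=\mathrm{nop}$, $u=v$. $\xrightarrow{*}$ is the reflexive transitive closure; $|w'|$ is the length of $w'$. *)

From HB Require Import structures.
From mathcomp Require Import all_boot all_order all_algebra.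
From Stdlib Require Import Relations.
Set Implicit Arguments. Unset Strict Implicit. Unset Printing Implicit Defensive.
Import Order.TTheory GRing.Theory Num.Theory.

Fixpoint ack (j : nat) : nat -> nat :=
  match j with
  | 0 => S
  | j'.+1 => fun n => iter n.+1 (ack j') 1
  end.

Inductive Op (G : Type) : Type :=
  | Push of G
  | Pop of G
  | Nop.
Arguments Nop {G}.

(* Configurations are (state, counter, stack); the top of the stack is the
   END of the word (push(g) turns u into u g). *)
Definition config (Q G : Type) := (Q * nat * seq G)%type.

Definition pvas_step (Q G : Type) (T : Q -> int -> Op G -> Q -> Prop)
  (x y : config Q G) : Prop :=
  let: (p, c, u) := x in
  let: (q, d, v) := y in
  exists (a : int) (op : Op G),
    T p a op q /\ (d%:Z = c%:Z + a)%R /\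
    match op with
    | Push g => v = rcons u g
    | Pop g => u = rcons v g
    | Nop => u = v
    end.

Definition pvas_reach (Q G : Type) (T : Q -> int -> Op G -> Q -> Prop) :=
  clos_refl_trans (config Q G) (pvas_step T).

(* The PVAS P_m: states option 'I_(m.+1) (None = bottom, Some i = i),
   stack alphabet 'I_(m.+1) (i stands for gamma_i). *)
Inductive Pm_trans (m : nat) :
    option 'I_m.+1 -> int -> Op 'I_m.+1 -> option 'I_m.+1 -> Prop :=
  | Pm_t0 : Pm_trans None 0%R (Pop ord0) (Some ord0)
  | Pm_t1 : Pm_trans (Some ord0) 1%R Nop None
  | Pm_pop (i : 'I_m.+1) : 0 < i -> Pm_trans None 0%R (Pop i) (Some i)
  | Pm_inc (i j : 'I_m.+1) : 0 < i -> val j = i.-1 ->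
      Pm_trans (Some i) 1%R (Push j) None
  | Pm_dec (i j : 'I_m.+1) : 0 < i -> val j = i.-1 ->
      Pm_trans (Some i) (-1)%R (Push j) (Some i).

Definition theta (m : nat) (c : nat) (w : seq 'I_m.+1) : nat :=
  foldr (fun (i : 'I_m.+1) acc => ack i acc) c w.

From mathcomp Require Import all_boot all_order all_algebra.
From mathcomp Require Import zify.
From Stdlib Require Import Relations.

Set Implicit Arguments.
Unset Strict Implicit.

(* In state [i > 0] the machine is half-way through an increment or decrement
   of the counter against one copy of [gamma_i]; reading the state [i] as an
   extra [gamma_i] on top of the stack extends [theta] to a potential on all
   configurations.  The potential never increases along a transition: a
   decrement in state [i] turns [A_i (c+1)] into [A_(i-1) (A_i c)], which is
   equal, and an increment replaces [A_i c] by [A_(i-1) (c+1) <= A_i c].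
   Since [theta c w >= c + |w|], the reachable configurations from [x] have
   counter and stack height bounded by the potential of [x]. *)

Lemma leq_add_iter (f : nat -> nat) (x k : nat) :
  (forall n, n < f n) -> x + k <= iter k f x.
Proof.
move=> f_gt; elim: k => [|k IH] /=; first by rewrite addn0.
by rewrite addnS; apply: leq_ltn_trans IH (f_gt _).
Qed.

Lemma ltn_ack j n : n < ack j n.
Proof.
elim: j n => [|j IH] n //=.
rewrite -iterS; have := @leq_add_iter (ack j) 1 n.+1 IH; lia.
Qed.

Lemma leq_ack j : {homo ack j : n n' / n <= n'}.
Proof.
case: j => [|j] n n' //= le_nn'.
rewrite -!iterS -(subnK le_nn') -addnS iterD.
elim: (n' - n) => [|k IH] //=.
exact: leq_trans IH (ltnW (ltn_ack _ _)).
Qed.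

Lemma ack_leq_ackS j c : ack j c.+1 <= ack j.+1 c.
Proof.
rewrite /=; apply: leq_ack; have := @leq_add_iter (ack j) 1 c (@ltn_ack j); lia.
Qed.

Section Theta.
Variable m : nat.
Implicit Types (w : seq 'I_m.+1) (c : nat).

Lemma leq_theta w : {homo (fun c => theta c w) : c c' / c <= c'}.
Proof. by elim: w => [|i w IH] c c' //= le_cc'; apply/leq_ack/IH. Qed.

Lemma leq_size_theta c w : c + size w <= theta c w.
Proof.
elim: w => [|i w IH] /=; first by rewrite addn0.
by rewrite addnS; apply: leq_ltn_trans IH (ltn_ack _ _).
Qed.

Lemma theta_rcons c w i : theta c (rcons w i) = theta (ack i c) w.
Proof. by rewrite /theta foldr_rcons. Qed.

End Theta.

Definition Pm_potential m (x : config (option 'I_m.+1) 'I_m.+1) : nat :=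
  let: (q, c, w) := x in
  if q is Some i then theta c (rcons w i) else theta c w.

Lemma leq_size_potential m q c (w : seq 'I_m.+1) :
  c + size w <= Pm_potential (q, c, w).
Proof.
case: q => [i|] /=; last exact: leq_size_theta.
by have := leq_size_theta c (rcons w i); rewrite size_rcons; lia.
Qed.

Lemma Pm_potential_step m x y :
  pvas_step (@Pm_trans m) x y -> Pm_potential y <= Pm_potential x.
Proof.
move: x y => [[p c] u] [[q d] v] /= [a [op [t [def_d def_op]]]].
case: t def_d def_op => /= [| |i _|i j i_gt0 def_j|i j i_gt0 def_j] def_d ->.
- by have -> : d = c by lia.
- have -> : d = c.+1 by lia.
  by rewrite theta_rcons.
- by have -> : d = c by lia.
- have -> : d = c.+1 by lia.
  rewrite !theta_rcons; have -> : nat_of_ord i = j.+1 by lia.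
  exact/leq_theta/ack_leq_ackS.
- have -> : c = d.+1 by lia.
  rewrite !theta_rcons; have -> : nat_of_ord i = j.+1 by lia.
  by [].
Qed.

Lemma clos_rt_nonincreasing T (R : relation T) (f : T -> nat) :
  (forall x y, R x y -> f y <= f x) ->
  forall x y, clos_refl_trans T R x y -> f y <= f x.
Proof.
move=> f_step x y; elim=> // {}x {}y z _ le_yx _ le_zy.
exact: leq_trans le_zy le_yx.
Qed.

Section BoundedConfigs.
Variables (Q G : finType).

Definition bounded_configs (N : nat) : seq (config Q G) :=
  [seq (qc, w) | qc <- [seq (q, c) | q <- enum Q, c <- iota 0 N.+1],
                 w <- flatten [seq [seq val t | t <- enum {: n.-tuple G}]
                              | n <- iota 0 N.+1]].

Lemma mem_bounded_configs N q c (w : seq G) :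
  c + size w <= N -> (q, c, w) \in bounded_configs N.
Proof.
move=> le_N; apply: (allpairs_f pair (x := (q, c))).
  by apply: allpairs_f; rewrite ?mem_enum // mem_iota; lia.
apply/flatten_mapP; exists (size w); first by rewrite mem_iota; lia.
by apply: (map_f val (x := in_tuple w)); rewrite mem_enum.
Qed.

End BoundedConfigs.

Theorem mainTheorem5 (m : nat) :
  (forall (c c' : nat) (w w' : seq 'I_m.+1),
     pvas_reach (@Pm_trans m) (None, c, w) (None, c', w') ->
     theta c' w' <= theta c w /\ c' + size w' <= theta c' w') /\
  (forall x : config (option 'I_m.+1) 'I_m.+1,
     exists s : seq (config (option 'I_m.+1) 'I_m.+1),
       forall y, pvas_reach (@Pm_trans m) x y -> y \in s).
Proof.
have reach_potential := clos_rt_nonincreasing (@Pm_potential_step m).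
split=> [c c' w w' reach_xy | x].
  by split; [exact: (reach_potential _ _ reach_xy) | exact: leq_size_theta].
exists (bounded_configs _ _ (Pm_potential x)) => -[[q c] w] reach_xy.
apply: mem_bounded_configs.
apply: leq_trans (leq_size_potential q c w) _.
exact: reach_potential reach_xy.
Qed.
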